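(* If the algorithm Classifier outputs ''Yes'' on input configuration $G$, then $G$ is a feasible configuration.
   Context: Model. A configuration is a finite simple undirected connected graph $G$ with $n$ nodes, each node $v$ tagged with a non-negative integer $t_v$ (wakeup tag); smallest tag $0$, span $\sigma$ = largest tag. Nodes are anonymous and communicate in synchronous global rounds. A node $v$ wakes up in the first global round $r\le t_v$ in which it receives a message, if any, and otherwise in global round $t_v$; its local clock is $0$ in its wakeup round, it acts from local round $1$, and nodes do not know the global clock. In each round a node transmits a message to all neighbours, listens, or terminates. A listening node receives $M$ if exactly one neighbour transmits ($M$), hears collision noise (distinct from silence and messages) if at least two neighbours transmit, and silence otherwise; a transmitting node hears nothing. A DRIP is a common function mapping a node's history (what it heard in each local round $0,\ldots,i-1$, including whether/by which message it was woken) to its action in local round $i\ge1$, with every node eventually terminating permanently; a decision function maps each node's final history to $\{0,1\}$; a dedicated leader election algorithm for $G$ is a DRIP plus decision function such that exactly one node of $G$ outputs $1$; $G$ is feasible if one exists. Algorithm Classifier (centralized, input $G$): maintains a partition of the nodes into classes $\mathrm{class}(v)\in\{1,\ldots,\mathit{numClasses}\}$, initially all in class $1$. One iteration: for each node $v$, its label $L_v$ is the set of triples obtained as follows: for each neighbour $w$ with $\mathrm{class}(w)\ne\mathrm{class}(v)$ or $t_w\ne t_v$ form the pair $(\mathrm{class}(w),\sigma+1+t_w-t_v)$; for each distinct pair $(a,b)$ so formed, $L_v$ contains $(a,b,1)$ if exactly one neighbour yields it and $(a,b,* )$ otherwise. Then the partition is refined: two nodes share a new class iff they shared a class before and have equal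 labels. Main loop: for $i=1,\ldots,\lceil n/2\rceil$: record $\mathit{old}=\mathit{numClasses}$; do one iteration; if some class has exactly one node, output ''Yes'' and stop; else if the number of classes equals $\mathit{old}$, output ''No'' and stop. *)

From mathcomp Require Import all_boot.
Set Implicit Arguments. Unset Strict Implicit. Unset Printing Implicit Defensive.

Definition is_config (T : finType) (e : rel T) (t : T -> nat) : Prop :=
  [/\ symmetric e, irreflexive e, (forall x y : T, connect e x y)
    & exists v : T, t v = 0].

Definition span (T : finType) (t : T -> nat) : nat := \max_(v : T) t v.

(* What a node hears in one round. OSelf: the node transmitted (hears nothing). *)
Inductive obs := OSil | ONoise | OMsg of nat | OSelf.
Inductive action := Transmit of nat | Listen | Terminate.
(* State of a node at the end of a global round; the history records what the
   node heard in each of its local rounds 0 .. i-1 (round 0 = wakeup round). *)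
Inductive nstate := Asleep | Awake of seq obs | Done of seq obs.

Section Exec.
Variables (T : finType) (e : rel T) (t : T -> nat) (A : seq obs -> action).

(* message transmitted by a node whose state at the end of the previous round is s *)
Definition tmsg (s : nstate) : option nat :=
  match s with
  | Awake h => if A h is Transmit m then Some m else None
  | _ => None
  end.

Definition transmitters (st : T -> nstate) (v : T) : {set T} :=
  [set w | e v w && (tmsg (st w) != None)].

Definition heard (st : T -> nstate) (v : T) : obs :=
  let X := transmitters st v in
  if #|X| == 0 then OSil
  else if #|X| == 1 then
    (if [pick w in X] is Some w then
       (if tmsg (st w) is Some m then OMsg m else OSil)
     else OSil)
  else ONoise.

Definition step (r : nat) (st : T -> nstate) : T -> nstate := fun v =>
  match st v with
  | Asleep =>
      if heard st v is OMsg _ then Awake [:: heard st v]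
      else if r == t v then Awake [:: heard st v] else Asleep
  | Awake h =>
      match A h with
      | Transmit _ => Awake (rcons h OSelf)
      | Listen => Awake (rcons h (heard st v))
      | Terminate => Done h
      end
  | Done h => Done h
  end.

(* states at the end of global round r *)
Fixpoint exec (r : nat) : T -> nstate :=
  match r with
  | 0 => step 0 (fun _ => Asleep)
  | r'.+1 => step r'.+1 (exec r')
  end.
End Exec.

Definition is_done (s : nstate) : bool := if s is Done _ then true else false.
Definition final_hist (s : nstate) : seq obs :=
  match s with Done h => h | Awake h => h | Asleep => [::] end.

(* A dedicated leader election algorithm for G exists: a DRIP A (under which
   every node eventually terminates) and a decision function d such that
   exactly one node outputs 1. *)
Definition feasible (T : finType) (e : rel T) (t : T -> nat) : Prop :=
  exists (A : seq obs -> action) (d : seq obs -> bool) (r : nat),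
    (forall v : T, is_done (exec e t A r v)) /\
    #|[set v : T | d (final_hist (exec e t A r v))]| = 1.

(* Algorithm Classifier. A partition is represented by its equivalence *)
(* relation P; the class of v is the set [set w | P v w].              *)
Section Classifier.
Variables (T : finType) (e : rel T) (t : T -> nat).

Definition cls (P : rel T) (v : T) : {set T} := [set w | P v w].

Definition formed (P : rel T) (v : T) : seq ({set T} * nat) :=
  [seq (cls P w, (span t).+1 + t w - t v)
  | w <- enum T & e v w && (~~ P v w || (t w != t v))].

(* label: triples (a, b, true) for "1" (exactly one neighbour), (a, b, false) for "*" *)
Definition label (P : rel T) (v : T) : seq ({set T} * nat * bool) :=
  [seq (p, count_mem p (formed P v) == 1) | p <- undup (formed P v)].

Definition same_label (P : rel T) (u v : T) : bool :=
  all (fun x => x \in label P v) (label P u) &&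
  all (fun x => x \in label P u) (label P v).

Definition refine (P : rel T) : rel T := fun u v => P u v && same_label P u v.

Definition part (i : nat) : rel T := iter i refine (fun _ _ => true).

Definition numClasses (P : rel T) : nat := #|[set cls P v | v : T]|.
Definition has_singleton (P : rel T) : bool := [exists v, #|cls P v| == 1].

(* Classifier outputs "Yes": at some iteration i in 1..ceil(n/2) a singleton class
   appears, and no earlier iteration stopped (no singleton, number of classes grew). *)
Definition classifier_yes : Prop :=
  exists i : nat,
    [/\ 1 <= i <= uphalf #|T|, has_singleton (part i)
      & forall j, 1 <= j < i ->
          ~~ has_singleton (part j) /\ numClasses (part j) <> numClasses (part j.-1)].
End Classifier.

From HB Require Import structures.
From mathcomp Require Import all_boot zify.
Set Implicit Arguments. Unset Strict Implicit. Unset Printing Implicit Defensive.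

(* The partitions computed by Classifier can be realised by a radio schedule.
   Local time is cut into frames of 2σ+2 rounds, one for each iteration k < K
   and each candidate class C; in frame (k, C) every node whose class in the
   k-th partition is C transmits at offset σ+1. Tags are at most σ, so nothing
   is sent before every node has woken up at its own tag, and a node v
   listening at offset b of frame (k, C) hears silence, a message or noise
   according as zero, one or several neighbours w of class C satisfy
   σ+1+t_w-t_v = b: it hears its k-th label (the pair (class v, σ+1) omitted
   from labels is exactly the slot where v itself transmits). By induction on
   k, equal histories after the first k blocks of frames force equal classes in
   the k-th partition, so the schedule is a function of the history, i.e. a
   DRIP. If the K-th partition has a singleton class {w}, deciding "my final
   history is that of w" elects exactly w. *)

Definition obs_eqb (o1 o2 : obs) : bool :=
  match o1, o2 with
  | OSil, OSil | ONoise, ONoise | OSelf, OSelf => true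
  | OMsg m, OMsg n => m == n
  | _, _ => false
  end.

Lemma obs_eqP : Equality.axiom obs_eqb.
Proof.
case=> [||m|] [||n|] /=; try by constructor.
by apply: (iffP eqP) => [->|[]].
Qed.

HB.instance Definition _ := hasDecEq.Build obs obs_eqP.

Lemma count_enumT (T : finType) (a : pred T) : count a (enum T) = #|a|.
Proof.
rewrite cardE /enum_mem size_filter count_filter.
by apply: eq_count => x; rewrite /= andbT.
Qed.

Section MixedRadix.
Variables (N W : nat).

Lemma mixed_radix_offset k c b : b < W -> ((k * N + c) * W + b) %% W = b.
Proof. by move=> ltbW; rewrite modnMDl modn_small. Qed.

Lemma mixed_radix_digits k c b : c < N -> b < W ->
  ((k * N + c) * W + b) %/ W %/ N = k /\ ((k * N + c) * W + b) %/ W %% N = c.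
Proof.
move=> ltcN ltbW; rewrite divnMDl ?(leq_ltn_trans _ ltbW) // (divn_small ltbW) addn0.
by rewrite divnMDl ?(leq_ltn_trans _ ltcN) // (divn_small ltcN) addn0 modnMDl modn_small.
Qed.

Lemma mixed_radix_lt k c b : c < N -> b < W -> (k * N + c) * W + b < k.+1 * N * W.
Proof.
move=> ltcN ltbW; apply: (@leq_trans ((k * N + c).+1 * W)); first by rewrite mulSn; lia.
by rewrite leq_mul2r mulSn; apply/orP; right; lia.
Qed.

Lemma mixed_radix_lead_le x : x %/ W %/ N * N * W <= x.
Proof. by rewrite (leq_trans _ (leq_divM x W)) // leq_mul2r leq_divM orbT. Qed.

Lemma eq_mixed_radix_offset q q' a b : a < W -> b < W -> q * W + a = q' * W + b -> a = b.
Proof.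
by move=> ltaW ltbW qa_q'b; rewrite -(modn_small ltaW) -(modnMDl q) qa_q'b modnMDl modn_small.
Qed.

End MixedRadix.

Definition obs_of_count (n : nat) : obs :=
  if n == 0 then OSil else if n == 1 then OMsg 0 else ONoise.

Lemma obs_of_count_inj m n : obs_of_count m = obs_of_count n ->
  (m == 0) = (n == 0) /\ (m == 1) = (n == 1).
Proof. by case: m => [|[|m]]; case: n => [|[|n]]. Qed.

Section Radio.
Variables (T : finType) (e : rel T) (t : T -> nat) (A : seq obs -> action).

Lemma heard_uniform (st : T -> nstate) (p : pred T) v :
  (forall w, tmsg A (st w) = if p w then Some 0 else None) ->
  heard e A st v = obs_of_count #|[set w | e v w && p w]|.
Proof.
move=> tmsgE; rewrite /heard.
have -> : transmitters e A st v = [set w | e v w && p w].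
  by apply/setP => w; rewrite !inE tmsgE; case: (p w).
rewrite /obs_of_count; case: eqP => // _; case: eqP => // /eqP/cards1P[w Xw].
have := set11 w; rewrite -Xw inE => /andP[_ pw].
rewrite Xw; case: pickP => [x|/(_ w)]; rewrite !inE ?eqxx // => /eqP ->.
by rewrite tmsgE pw.
Qed.

Lemma eq_heard (st1 st2 : T -> nstate) : st1 =1 st2 -> heard e A st1 =1 heard e A st2.
Proof.
move=> st12 v; rewrite /heard.
have -> : transmitters e A st1 v = transmitters e A st2 v.
  by apply/setP => w; rewrite !inE st12.
by case: pickP => // w _; rewrite st12.
Qed.

Lemma eq_step r (st1 st2 : T -> nstate) :
  st1 =1 st2 -> step e t A r st1 =1 step e t A r st2.
Proof. by move=> st12 v; rewrite /step st12 (eq_heard st12). Qed.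

End Radio.

Section Refinement.
Variables (T : finType) (e : rel T) (t : T -> nat).
Local Notation sigma := (span t).
Local Notation formed := (formed e t).

Lemma tag_le_span v : t v <= sigma.
Proof. exact: (leq_bigmax (F := t) v). Qed.

Lemma same_label_refl P : reflexive (same_label e t P).
Proof. by move=> u; rewrite /same_label andbb; apply/allP. Qed.

Lemma same_label_sym P : symmetric (same_label e t P).
Proof. by move=> u v; rewrite /same_label andbC. Qed.

Lemma same_label_trans P : transitive (same_label e t P).
Proof.
move=> v u w /andP[/allP uv /allP vu] /andP[/allP vw /allP wv].
by apply/andP; split; apply/allP => x x_in; [apply/vw/uv | apply/vu/wv].
Qed.

Lemma part_refl k : reflexive (part e t k).
Proof. by elim: k => [|k IHk] // u; rewrite /= /refine IHk same_label_refl. Qed.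

Lemma part_sym k : symmetric (part e t k).
Proof. by elim: k => [|k IHk] // u v; rewrite /= /refine IHk same_label_sym. Qed.

Lemma part_trans k : transitive (part e t k).
Proof.
elim: k => [|k IHk] // v u w /andP[uv luv] /andP[vw lvw].
by rewrite /= /refine (IHk _ _ _ uv vw) (same_label_trans luv lvw).
Qed.

Lemma cls_eq_part k u v : (cls (part e t k) u == cls (part e t k) v) = part e t k u v.
Proof.
apply/eqP/idP => [clsE|uv].
  have : v \in cls (part e t k) v by rewrite inE part_refl.
  by rewrite -clsE inE.
apply/setP => w; rewrite !inE.
apply/idP/idP; apply: part_trans; last exact: uv.
by rewrite part_sym.
Qed.

Lemma part_cls_eq k u v : part e t k u v -> cls (part e t k) u = cls (part e t k) v.
Proof. by rewrite -cls_eq_part => /eqP. Qed.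

Lemma cls_card1 (P : rel T) w v : reflexive P -> #|cls P w| == 1 -> P w v -> v = w.
Proof.
move=> P_refl /cards1P[x clsE] wv.
have : w \in cls P w by rewrite inE.
have : v \in cls P w by rewrite inE.
by rewrite clsE !inE => /eqP -> /eqP ->.
Qed.

Lemma count_formed P u C b :
  count_mem (C, b) (formed P u) =
  #|[set w | [&& e u w, ~~ P u w || (t w != t u), cls P w == C & sigma.+1 + t w - t u == b]]|.
Proof.
rewrite /formed count_map count_filter cardsE -count_enumT.
apply: eq_count => w /=; rewrite xpair_eqE.
by case: (_ == C); case: (_ == b); rewrite /= ?andbT ?andbF.
Qed.

Lemma count_formed_far P u C b : sigma.*2.+2 <= b -> count_mem (C, b) (formed P u) = 0.
Proof.
move=> far; rewrite count_formed; apply: eq_card0 => w; rewrite !inE.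
by have := tag_le_span w; case: eqP; rewrite ?andbF //; lia.
Qed.

Lemma count_formed_self P u : reflexive P -> count_mem (cls P u, sigma.+1) (formed P u) = 0.
Proof.
move=> P_refl; rewrite count_formed; apply: eq_card0 => w; rewrite !inE.
have [/setP/(_ w)|] := eqVneq (cls P w) (cls P u); rewrite ?andbF // !inE P_refl => ->.
by have := tag_le_span w; have := tag_le_span u; case: eqP; rewrite ?andbF //=; lia.
Qed.

Lemma mem_label P u (x : {set T} * nat * bool) :
  (x \in label e t P u) =
  (x.1 \in formed P u) && (x.2 == (count_mem x.1 (formed P u) == 1)).
Proof.
case: x => p b /=; apply/mapP/andP => [[q + [-> ->]] | [p_in /eqP ->]].
  by rewrite mem_undup => ->.
by exists p; rewrite ?mem_undup.
Qed.

Lemma same_label_obs P u v :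
  (forall p, obs_of_count (count_mem p (formed P u)) = obs_of_count (count_mem p (formed P v))) ->
  same_label e t P u v.
Proof.
move=> obsE; apply/andP; split; apply/allP => x;
  by rewrite !mem_label -!has_pred1 !has_count !lt0n; have [-> ->] := obs_of_count_inj (obsE x.1).
Qed.

End Refinement.

Section Schedule.
Variables (T : finType) (e : rel T) (t : T -> nat) (K : nat).
Local Notation sigma := (span t).
Local Notation flen := sigma.*2.+2.
Local Notation nsets := #|{set T}|.
Local Notation part := (part e t).
Local Notation formed := (formed e t).

Definition frame (k : nat) (C : {set T}) (b : nat) : nat :=
  (k * nsets + enum_rank C) * flen + b.

Definition frame_iter (x : nat) : nat := x %/ flen %/ nsets.

Definition sends (v : T) (x : nat) : bool :=
  [&& frame_iter x < K, x %% flen == sigma.+1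
    & x %/ flen %% nsets == enum_rank (cls (part (frame_iter x)) v)].

Definition sends_at (w : T) (g : nat) : bool := (t w < g) && sends w (g - t w).

Definition senders (v : T) (g : nat) : {set T} := [set w | e v w && sends_at w g].

Definition obs_at (v : T) (x : nat) : obs :=
  if sends v x then OSelf else obs_of_count #|senders v (t v + x)|.

Definition hist (v : T) (n : nat) : seq obs := mkseq (obs_at v) n.

Definition duration : nat := K * nsets * flen.

Lemma sends_frame v k C b : k < K -> b < flen ->
  sends v (frame k C b) = (b == sigma.+1) && (C == cls (part k) v).
Proof.
move=> ltkK ltbW; rewrite /sends /frame_iter /frame mixed_radix_offset //.
have [-> ->] := mixed_radix_digits k (ltn_ord (enum_rank C)) ltbW.
by rewrite ltkK (inj_eq (@ord_inj _)) (inj_eq enum_rank_inj).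
Qed.

Lemma nsets_gt0 : 0 < nsets.
Proof. by apply/card_gt0P; exists set0. Qed.

Lemma duration_gt0 : 0 < K -> 0 < duration.
Proof. by move=> K_gt0; rewrite /duration !muln_gt0 K_gt0 nsets_gt0. Qed.

Lemma frame_iter_lt x : (frame_iter x < K) = (x < duration).
Proof. by rewrite /frame_iter /duration !ltn_divLR ?nsets_gt0. Qed.

Lemma sends_late v x : duration <= x -> sends v x = false.
Proof. by rewrite leqNgt /sends frame_iter_lt => /negbTE ->. Qed.

Lemma sends_at_frame u w k C b : k < K -> b < flen ->
  sends_at w (t u + frame k C b) = (b == sigma.+1 + t w - t u) && (C == cls (part k) w).
Proof.
move=> ltkK ltbW; have := tag_le_span t u; have := tag_le_span t w.
rewrite /sends_at /frame; set F := (_ * nsets + _) * _ => tw_le tu_le.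
have [->|offset_ne] := eqVneq b (sigma.+1 + t w - t u).
  have -> : t u + (F + (sigma.+1 + t w - t u)) - t w = frame k C sigma.+1 by rewrite /frame; lia.
  rewrite sends_frame // ?eqxx /=; last by lia.
  by have -> : t w < t u + (F + (sigma.+1 + t w - t u)) by lia.
apply/negbTE/andP => -[lt_tw /and3P[_ /eqP offset _]].
case/eqP: offset_ne; apply/esym.
apply: (@eq_mixed_radix_offset flen ((t u + (F + b) - t w) %/ flen) (k * nsets + enum_rank C));
  [lia | exact: ltbW |].
by have := divn_eq (t u + (F + b) - t w) flen; rewrite offset /F; lia.
Qed.

Lemma senders_frame u k C b : k < K -> b < flen ->
  ~~ ((C == cls (part k) u) && (b == sigma.+1)) ->
  #|senders u (t u + frame k C b)| = count_mem (C, b) (formed (part k) u).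
Proof.
move=> ltkK ltbW not_self; rewrite count_formed; apply: eq_card => w.
rewrite !inE sends_at_frame // [b == _]eq_sym [C == _]eq_sym; case: (e u w) => //=.
have [Puw|] /= := boolP (part k u w); last by rewrite andbC.
have [tw_tu|] /= := eqVneq (t w) (t u); last by rewrite andbC.
by rewrite -(part_cls_eq Puw) tw_tu addnK andbC eq_sym [_ == b]eq_sym (negbTE not_self).
Qed.

Lemma obs_at_frame u k C b : k < K -> b < flen ->
  ~~ ((C == cls (part k) u) && (b == sigma.+1)) ->
  obs_at u (frame k C b) = obs_of_count (count_mem (C, b) (formed (part k) u)).
Proof.
move=> ltkK ltbW not_self.
by rewrite /obs_at sends_frame // andbC (negbTE not_self) senders_frame.
Qed.

Lemma part_of_obs k u v : k <= K ->
  (forall x, x < k * nsets * flen -> obs_at u x = obs_at v x) -> part k u v.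
Proof.
elim: k => [|k IHk] // ltkK obsE.
have Puv : part k u v.
  apply: IHk => [|x ltx]; first exact: ltnW.
  by apply: obsE; apply: (leq_trans ltx); rewrite !leq_mul2r leqnSn !orbT.
rewrite /= /refine Puv; apply: same_label_obs => -[C b].
have [far|ltbW] := leqP flen b; first by rewrite !count_formed_far.
have [/andP[/eqP-> /eqP->]|not_self] := boolP ((C == cls (part k) u) && (b == sigma.+1)).
  by rewrite count_formed_self ?(part_cls_eq Puv) ?count_formed_self //; apply: part_refl.
rewrite -!obs_at_frame //; last by rewrite -(part_cls_eq Puv).
exact/obsE/mixed_radix_lt.
Qed.

Lemma part_of_hist k n u v :
  k <= K -> k * nsets * flen <= n -> hist u n = hist v n -> part k u v.
Proof.
move=> lekK len histE; apply: part_of_obs lekK _ => x ltx.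
by move/(congr1 (nth OSil ^~ x)): histE; rewrite !nth_mkseq // (leq_trans ltx len).
Qed.

Lemma sends_hist u v n : hist u n = hist v n -> sends u n = sends v n.
Proof.
move=> histE; rewrite /sends; case: ltnP => //= ltK.
by rewrite (part_cls_eq (part_of_hist (ltnW ltK) (mixed_radix_lead_le _ _ n) histE)).
Qed.

Lemma sends_at_early w g : g <= sigma -> sends_at w g = false.
Proof.
move=> le_g; rewrite /sends_at /sends modn_small; last by lia.
have -> : (g - t w == sigma.+1) = false by apply/negbTE; lia.
by rewrite !andbF.
Qed.

Lemma senders_early v g : g <= sigma -> senders v g = set0.
Proof. by move=> le_g; apply/setP => w; rewrite !inE sends_at_early // andbF. Qed.

Lemma obs_at0 v : obs_at v 0 = OSil.
Proof.
rewrite /obs_at addn0 senders_early ?tag_le_span // cards0.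
by rewrite /sends mod0n andbF.
Qed.

(* By [sends_hist], the witness [u] may be replaced by the node itself. *)
Definition drip (h : seq obs) : action :=
  if duration <= size h then Terminate
  else if [exists u, (h == hist u (size h)) && sends u (size h)] then Transmit 0
  else Listen.

Lemma drip_hist v n :
  drip (hist v n) = if duration <= n then Terminate else if sends v n then Transmit 0 else Listen.
Proof.
rewrite /drip size_mkseq; case: leqP => // _.
have -> : [exists u, (hist v n == hist u n) && sends u n] = sends v n.
  apply/existsP/idP => [[u /andP[/eqP histE]]|]; first by rewrite (sends_hist histE).
  by exists v; rewrite eqxx.
by [].
Qed.

(* The state of [v] after the global rounds [0, ..., n - 1]. *)
Definition state (v : T) (n : nat) : nstate :=
  if n <= t v then Asleep
  else if n - t v <= duration then Awake (hist v (n - t v))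
  else Done (hist v duration).

Lemma tmsg_state w n : tmsg drip (state w n) = if sends_at w n then Some 0 else None.
Proof.
rewrite /state /sends_at; case: leqP => //= lt_n.
case: leqP => [le_d|lt_d] /=; last by rewrite sends_late // ltnW.
by rewrite drip_hist; case: leqP => [ge_d|_]; [rewrite sends_late | case: sends].
Qed.

Lemma heard_state n v : heard e drip (state^~ n) v = obs_of_count #|senders v n|.
Proof. exact: (@heard_uniform _ _ _ _ (sends_at ^~ n) _ (tmsg_state ^~ n)). Qed.

Lemma step_state n v : 0 < K -> step e t drip n (state^~ n) v = state v n.+1.
Proof.
move/duration_gt0 => dur_gt0.
rewrite /step heard_state {1}/state; case: leqP => [le_n|lt_n].
  rewrite senders_early ?(leq_trans le_n (tag_le_span t v)) // cards0 /= /state.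
  have [->|ne_n] := eqVneq n (t v); first by rewrite ltnn subSnn dur_gt0 /hist /mkseq /= obs_at0.
  by rewrite ltn_neqAle ne_n le_n.
rewrite [RHS]/state ltnNge (ltnW lt_n) /= subSn ?(ltnW lt_n) //; set i := n - t v.
case: (leqP i duration) => [le_id|lt_di] /=; last by rewrite ltnNge (ltnW lt_di).
rewrite drip_hist; case: (leqP duration i) => [ge_id|lt_id].
  by have -> : i = duration by apply/eqP; rewrite eqn_leq le_id ge_id.
rewrite /hist mkseqS /obs_at.
by case: sends; rewrite // subnKC // ltnW.
Qed.

Lemma exec_state r : 0 < K -> exec e t drip r =1 state^~ r.+1.
Proof.
move=> K_gt0; elim: r => [|r IHr] v /=; rewrite -step_state //; exact: eq_step.
Qed.

Lemma exec_done r v : 0 < K -> sigma + duration <= r -> exec e t drip r v = Done (hist v duration).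
Proof.
move=> K_gt0 le_r; have := tag_le_span t v => tv_le.
rewrite exec_state // /state.
have -> : (r.+1 <= t v) = false by lia.
by have -> : (r.+1 - t v <= duration) = false by lia.
Qed.

End Schedule.

Theorem lemma8 (T : finType) (e : rel T) (t : T -> nat) :
  is_config e t -> classifier_yes e t -> feasible e t.
Proof.
move=> _ [K [/andP[K_gt0 _] /existsP[w singleton_w] _]].
pose final v := hist e t K v (duration t K).
exists (drip e t K), (fun h => h == final w), (span t + duration t K).
have final_exec v : exec e t (drip e t K) (span t + duration t K) v = Done (final v).
  exact: exec_done.
split => [v|]; first by rewrite final_exec.
apply/eqP/cards1P; exists w; apply/setP => v; rewrite !inE final_exec /=.
apply/eqP/eqP => [final_vw|->] //; apply: cls_card1 singleton_w _; first exact: part_refl.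
by rewrite part_sym; apply: part_of_hist final_vw.
Qed.
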